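(* We have $\det(A)\neq0$ if and only if condition (C3) holds and $A\neq0$. If $\det(A)\ne0$ and $\int_{\mathbb{R}^d}|x|^2N(dx)<\infty$, then (C3) holds with $T_3=\infty$.
   Context: $Y$ is a Lévy process in $\mathbb{R}^d$ with generating triplet $(A,N,b)$ ($A$ symmetric non-negative definite $d\times d$ matrix, $b\in\mathbb{R}^d$, $N$ Lévy measure), characteristic exponent $\Psi$ ($\mathbb{E}e^{i\langle x,Y_t\rangle}=e^{-t\Psi(x)}$), $\Psi^*(r)=\sup_{|z|\le r}\mathrm{Re}\,\Psi(z)$. Standing assumption: $h(0^+)=\infty$ where $h(r)=r^{-2}\|A\|+\int(1\wedge|x|^2/r^2)N(dx)$. Condition (C3): there are $T_3\in(0,\infty]$, $c_3\in(0,1]$, $\alpha_3\in(0,2]$ such that $c_3\Psi^*(|x|)\le\mathrm{Re}\Psi(x)$ for all $|x|>1/T_3$, and $\Psi^*(\lambda r)\ge c_3\lambda^{\alpha_3}\Psi^*(r)$ for all $\lambda\ge1$, $r>1/T_3$ (with $1/\infty=0$). *)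

From HB Require Import structures.
From mathcomp Require Import all_boot all_order all_algebra.
From mathcomp Require Import all_classical all_reals all_analysis.
Set Implicit Arguments. Unset Strict Implicit. Unset Printing Implicit Defensive.
Import Order.TTheory GRing.Theory Num.Theory.
Import numFieldNormedType.Exports.
Local Open Scope classical_set_scope.
Local Open Scope ring_scope.

Section LevyDefs.
Variables (R : realType) (d : nat).

Definition Rd : Type := g_sigma_algebraType (@open 'rV[R]_d).

Definition inner (x y : 'rV[R]_d) : R := (x *m y^T) 0 0.
Definition enorm (x : 'rV[R]_d) : R := Num.sqrt (inner x x).

Definition opnorm (A : 'M[R]_d) : R :=
  sup [set enorm (z *m A) | z in [set z : 'rV[R]_d | enorm z <= 1]].

Definition quad (A : 'M[R]_d) (x : 'rV[R]_d) : R := (x *m A *m x^T) 0 0.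

Definition symmetric_nnd (A : 'M[R]_d) : Prop :=
  A^T = A /\ forall x : 'rV[R]_d, 0 <= quad A x.

Definition levy_measure (N : {measure set Rd -> \bar R}) : Prop :=
  N [set (0 : 'rV[R]_d)] = 0%E /\
  (\int[N]_(y in [set: Rd]) (Num.min 1 (enorm y ^+ 2))%:E < +oo)%E.

(* The characteristic exponent Psi of the Levy process with triplet (A,N,b)
   (Levy-Khintchine formula, E e^{i<x,Y_t>} = e^{-t Psi(x)}), given by its
   real and imaginary parts:
   Psi(x) = 1/2 <x,Ax> - i<b,x> + int (1 - e^{i<x,y>} + i<x,y> 1_{|y|<1}) N(dy). *)
Definition RePsi (A : 'M[R]_d) (N : {measure set Rd -> \bar R}) (x : 'rV[R]_d) : R :=
  quad A x / 2 + fine (\int[N]_(y in [set: Rd]) (1 - cos (inner x y))%:E).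

Definition ImPsi (N : {measure set Rd -> \bar R}) (b x : 'rV[R]_d) : R :=
  - inner b x + fine (\int[N]_(y in [set: Rd])
      ((if enorm y < 1 then inner x y else 0) - sin (inner x y))%:E).

Definition Psi (A : 'M[R]_d) (N : {measure set Rd -> \bar R}) (b x : 'rV[R]_d)
  : R * R := (RePsi A N x, ImPsi N b x).

Definition Psistar (A : 'M[R]_d) (N : {measure set Rd -> \bar R}) (r : R) : R :=
  sup [set RePsi A N z | z in [set z : 'rV[R]_d | enorm z <= r]].

Definition hfun (A : 'M[R]_d) (N : {measure set Rd -> \bar R}) (r : R) : \bar R :=
  ((opnorm A / r ^+ 2)%:E +
   \int[N]_(y in [set: Rd]) (Num.min 1 (enorm y ^+ 2 / r ^+ 2))%:E)%E.

Definition standing (A : 'M[R]_d) (N : {measure set Rd -> \bar R}) : Prop :=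
  hfun A N r @[r --> 0^'+] --> +oo%E.

(* "r > 1/T" with the convention 1/oo = 0 (T in (0, oo]) *)
Definition gt_inv (T : \bar R) (r : R) : Prop :=
  match T with
  | EFin t => t^-1 < r
  | _ => 0 < r
  end.

Definition C3_with (A : 'M[R]_d) (N : {measure set Rd -> \bar R}) (T3 : \bar R)
  : Prop :=
  (0 < T3)%E /\
  exists (c3 alpha3 : R),
    [/\ 0 < c3 <= 1, 0 < alpha3 <= 2,
     (forall x : 'rV[R]_d, gt_inv T3 (enorm x) ->
        c3 * Psistar A N (enorm x) <= RePsi A N x) &
     (forall lam r : R, 1 <= lam -> gt_inv T3 r ->
        c3 * lam `^ alpha3 * Psistar A N r <= Psistar A N (lam * r))].

Definition C3 (A : 'M[R]_d) (N : {measure set Rd -> \bar R}) : Prop :=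
  exists T3 : \bar R, C3_with A N T3.

End LevyDefs.
Arguments Rd : clear implicits.

(* If A is invertible, Re Psi(x) >= <x, A x> / 2 >= lam |x|^2, while
   1 - cos t <= min (2, t^2 / 2) bounds Re Psi(x) by C |x|^2 for |x| >= 1, and for
   all x when N has a finite second moment; such two-sided quadratic bounds give
   (C3) with alpha3 = 2.  Conversely, let A <> 0 be singular and v a unit vector
   with v A = 0.  By dominated convergence Re Psi(t v) = int (1 - cos <t v, y>) N(dy)
   is o(t^2), whereas Psi*(t) >= t^2 <u, A u> / 2 for a unit u with <u, A u> > 0;
   this contradicts c3 Psi*(|x|) <= Re Psi(x) along x = t v. *)

From HB Require Import structures.
From mathcomp Require Import all_boot all_order all_algebra.
From mathcomp Require Import all_classical all_reals all_analysis.
From mathcomp Require Import measurable_realfun.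
From mathcomp Require Import ring lra.
Import Order.TTheory GRing.Theory Num.Theory.
Import numFieldNormedType.Exports.
Set Implicit Arguments. Unset Strict Implicit. Unset Printing Implicit Defensive.
Local Open Scope classical_set_scope.
Local Open Scope ring_scope.

Section trigonometry.
Variable R : realType.

Lemma sin_le_id (x : R) : 0 <= x -> sin x <= x.
Proof.
move=> x0.
have := @ger0_derive1_ndecry R (fun t => t - sin t) 0 _ _ _ 0 x (lexx _) x0.
rewrite sin0 subr0 subr_ge0; apply.
- by move=> t _; apply: derivableB => //; exact: derivable_sin.
- by move=> t _; rewrite derive1E derive_val /= subr_ge0 cos_le1.
- apply: continuous_subspaceT => t.
  by apply: continuousB; [exact: cvg_id | exact: continuous_sin].
Qed.

Lemma one_sub_cos_le_sqr (x : R) : 1 - cos x <= x ^+ 2 / 2.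
Proof.
wlog x0 : x / 0 <= x.
  move=> H; have [/H//|/ltW] := leP 0 x.
  by rewrite -oppr_ge0 => /H; rewrite cosN sqrrN.
pose f t : R := t ^+ 2 / 2 - 1 + cos t.
have df t : derivable f t 1.
  apply: derivableD; last exact: derivable_cos.
  by apply: derivableB => //; apply: derivableM => //; exact: derivableX.
have := @ger0_derive1_ndecry R f 0 _ _ _ 0 x (lexx _) x0.
rewrite /f expr0n /= mul0r sub0r cos0 addNr => f_ge0.
suff: 0 <= f x by rewrite /f; lra.
apply: f_ge0; first by move=> t _; exact: df.
- move=> t; rewrite in_itv /= andbT => t0; rewrite derive1E derive_val.
  rewrite !scaler0 add0r subr0 /GRing.scale /= mulr1.
  by have := sin_le_id (ltW t0); lra.
- by apply: derivable_within_continuous => t _; exact: df.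
Qed.

Lemma one_sub_cos_mul_div_sqr_cvg0 (a : R) :
  (fun n => (1 - cos (n.+1%:R * a)) / n.+1%:R ^+ 2) @ \oo --> 0.
Proof.
apply/cvgr0Pnorm_lt => e e0; near=> n.
have n1 : 1 <= n.+1%:R :> R by rewrite ler1n.
have n2 : n.+1%:R <= n.+1%:R ^+ 2 :> R by rewrite expr2 ler_peMl.
have ne : 2 < e * n.+1%:R.
  rewrite -ltr_pdivrMl // mulrC; near: n; apply: filterS (nbhs_infty_gtr (2 / e)).
  by move=> n en; rewrite (lt_le_trans en) // ler_nat.
have := cos_le1 (n.+1%:R * a); have := cos_geN1 (n.+1%:R * a) => c1 c2.
rewrite ger0_norm ?divr_ge0 ?sqr_ge0 ?subr_ge0 // ltr_pdivrMr; last lra.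
have : e * n.+1%:R <= e * n.+1%:R ^+ 2 by rewrite ler_pM2l.
lra.
Unshelve. all: end_near.
Qed.

End trigonometry.

Section euclidean.
Variables (R : realType) (d : nat).
Implicit Types (x y : 'rV[R]_d).

Lemma innerE x y : inner x y = \sum_i x 0 i * y 0 i.
Proof. by rewrite /inner !mxE; apply: eq_bigr => i _; rewrite mxE. Qed.

Lemma innerC x y : inner x y = inner y x.
Proof. by rewrite !innerE; apply: eq_bigr => i _; rewrite mulrC. Qed.

Lemma innerZl a x y : inner (a *: x) y = a * inner x y.
Proof. by rewrite !innerE mulr_sumr; apply: eq_bigr => i _; rewrite mxE mulrA. Qed.

Lemma innerZr a x y : inner x (a *: y) = a * inner x y.
Proof. by rewrite innerC innerZl innerC. Qed.

Lemma inner_self_ge0 x : 0 <= inner x x.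
Proof. by rewrite innerE; apply: sumr_ge0 => i _; rewrite -expr2 sqr_ge0. Qed.

Lemma enorm_ge0 x : 0 <= enorm x.
Proof. exact: sqrtr_ge0. Qed.

Lemma enorm_sqr x : enorm x ^+ 2 = inner x x.
Proof. by rewrite /enorm sqr_sqrtr // inner_self_ge0. Qed.

Lemma enormZ a x : enorm (a *: x) = `|a| * enorm x.
Proof.
by rewrite /enorm innerZl innerZr mulrA sqrtrM ?sqr_ge0 // -expr2 sqrtr_sqr.
Qed.

Lemma enorm0 : enorm (0 : 'rV[R]_d) = 0.
Proof. by rewrite -(scale0r 0) enormZ normr0 mul0r. Qed.

Lemma enorm_eq0 x : (enorm x == 0) = (x == 0).
Proof.
apply/idP/idP => [|/eqP x0]; last by rewrite x0 enorm0.
rewrite /enorm sqrtr_eq0 innerE => x0; apply/eqP/rowP => i; rewrite mxE.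
have sq_ge0 j : true -> 0 <= x 0 j * x 0 j by rewrite -expr2 sqr_ge0.
have /(psumr_eq0P sq_ge0)/(_ i isT)/eqP : \sum_j x 0 j * x 0 j = 0.
  by apply/eqP; rewrite eq_le x0 sumr_ge0.
by rewrite mulf_eq0 orbb => /eqP.
Qed.

Lemma enorm_normalize x : x != 0 -> enorm ((enorm x)^-1 *: x) = 1.
Proof.
rewrite -enorm_eq0 => x0.
by rewrite enormZ ger0_norm ?invr_ge0 ?enorm_ge0 // mulVf.
Qed.

Lemma enorm_unit_exists : (0 < d)%N -> exists u : 'rV[R]_d, enorm u = 1.
Proof.
move=> d0; exists ((enorm (const_mx 1 : 'rV_d))^-1 *: const_mx 1).
apply: enorm_normalize; apply/eqP => /rowP /(_ (Ordinal d0)) /eqP.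
by rewrite !mxE oner_eq0.
Qed.

Lemma normr_coord_le x i : `|x 0 i| <= enorm x.
Proof.
rewrite -sqrtr_sqr /enorm ler_sqrt ?inner_self_ge0 // innerE.
rewrite (bigD1 i) //= -expr2 lerDl.
by apply: sumr_ge0 => j _; rewrite -expr2 sqr_ge0.
Qed.

(* A crude substitute for Cauchy-Schwarz: only the growth in [|x| |y|] matters. *)
Lemma normr_inner_le x y : `|inner x y| <= d%:R * (enorm x * enorm y).
Proof.
rewrite innerE; apply: (le_trans (ler_norm_sum _ _ _)).
rewrite mulr_natl -[d in _ *+ d]card_ord -sumr_const.
by apply: ler_sum => i _; rewrite normrM ler_pM ?normr_coord_le.
Qed.

Lemma sqr_inner_le x y :
  inner x y ^+ 2 <= d%:R ^+ 2 * enorm x ^+ 2 * enorm y ^+ 2.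
Proof.
rewrite -real_normK ?num_real // -mulrA -!exprMn.
by rewrite ler_pXn2r ?normr_inner_le // nnegrE ?mulr_ge0 ?enorm_ge0.
Qed.

Lemma enorm_le_sqr x r : enorm x <= r -> enorm x ^+ 2 <= r ^+ 2.
Proof.
move=> xr; have x0 := enorm_ge0 x.
by rewrite ler_pXn2r // nnegrE // (le_trans x0 xr).
Qed.

End euclidean.

Section quadratic_forms.
Variables (R : realType) (d : nat).
Implicit Types (x y : 'rV[R]_d) (M : 'M[R]_d).

Definition bilin M x y := (x *m M *m y^T) 0 0.

Definition mxnorm1 M := \sum_j \sum_i `|M i j|.

Lemma mxnorm1_ge0 M : 0 <= mxnorm1 M.
Proof. by apply: sumr_ge0 => j _; apply: sumr_ge0. Qed.

Lemma quadE M x : quad M x = \sum_j \sum_i x 0 i * M i j * x 0 j.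
Proof.
rewrite /quad !mxE; apply: eq_bigr => j _; rewrite !mxE mulr_suml.
by apply: eq_bigr => i _.
Qed.

Lemma quadZ M a x : quad M (a *: x) = a ^+ 2 * quad M x.
Proof.
rewrite !quadE mulr_sumr; apply: eq_bigr => j _; rewrite mulr_sumr.
by apply: eq_bigr => i _; rewrite !mxE; ring.
Qed.

Lemma quadD M x y :
  quad M (x + y) = quad M x + quad M y + bilin M x y + bilin M y x.
Proof. by rewrite /quad /bilin !mulmxDl linearD /= !mulmxDr !mxE; ring. Qed.

Lemma bilinZl M a x y : bilin M (a *: x) y = a * bilin M x y.
Proof. by rewrite /bilin -!scalemxAl mxE. Qed.

Lemma bilinC M x y : M^T = M -> bilin M x y = bilin M y x.
Proof.
move=> MT; rewrite /bilin.
have -> : y *m M *m x^T = (x *m M *m y^T)^T by rewrite !trmx_mul trmxK MT mulmxA.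
by rewrite [RHS]mxE.
Qed.

Lemma normr_quad_le M x : `|quad M x| <= mxnorm1 M * enorm x ^+ 2.
Proof.
rewrite quadE /mxnorm1 mulr_suml; apply: (le_trans (ler_norm_sum _ _ _)).
apply: ler_sum => j _; rewrite mulr_suml.
apply: (le_trans (ler_norm_sum _ _ _)); apply: ler_sum => i _.
rewrite !normrM expr2 [`|x 0 i| * _]mulrC -mulrA ler_wpM2l //.
by rewrite ler_pM ?normr_coord_le.
Qed.

Lemma quad_le_sqr M x r : enorm x <= r -> quad M x <= mxnorm1 M * r ^+ 2.
Proof.
move=> xr; apply: (le_trans (ler_norm _)); apply: (le_trans (normr_quad_le M x)).
by rewrite ler_wpM2l ?mxnorm1_ge0 ?enorm_le_sqr.
Qed.

Lemma sym_quad_eq0 M : M^T = M -> (forall x, quad M x = 0) -> M = 0.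
Proof.
move=> MT q0; have b0 x y : bilin M x y = 0.
  have := quadD M x y; rewrite !q0 (bilinC _ _ MT) !add0r => /esym/eqP.
  by rewrite -mulr2n mulrn_eq0 => /eqP.
apply/matrixP => i j; have := b0 (delta_mx 0 i) (delta_mx 0 j).
by rewrite /bilin -rowE trmx_delta -colE !mxE.
Qed.

Lemma nnd_quad_gt0 M : symmetric_nnd M -> M != 0 ->
  exists u, enorm u = 1 /\ 0 < quad M u.
Proof.
move=> [MT M_ge0] M0.
have [x qx] : exists x, quad M x != 0.
  apply: contrapT => nq; move/eqP: M0; apply; apply: sym_quad_eq0 => // x.
  by apply/eqP; apply: contrapT => qx; apply: nq; exists x; apply/negP.
have x0 : x != 0 by apply: contra_neq qx => ->; rewrite -(scale0r 0) quadZ expr0n mul0r.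
exists ((enorm x)^-1 *: x); rewrite enorm_normalize //; split => //.
rewrite quadZ mulr_gt0 ?exprn_gt0 ?invr_gt0 ?lt_def ?qx ?M_ge0 //.
by rewrite enorm_eq0 x0 enorm_ge0.
Qed.

Lemma det0_unit_kernel M : \det M = 0 -> exists v, enorm v = 1 /\ v *m M = 0.
Proof.
move=> /eqP /det0P [v v0 vM]; exists ((enorm v)^-1 *: v).
by rewrite enorm_normalize // -scalemxAl vM scaler0.
Qed.

(* Expand [0 <= quad M (x - s x M^-1)] with [s := 1 / (mxnorm1 M^-1 + 1)]: the
   cross terms give [-2 s |x|^2] and the last term is [s^2 quad M^-1 x], which
   is at most [s^2 mxnorm1 M^-1 |x|^2 = s (1 - s) |x|^2]. *)
Lemma quad_ge_unitmx M : symmetric_nnd M -> \det M != 0 ->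
  forall x, enorm x ^+ 2 / (mxnorm1 (invmx M) + 1) <= quad M x.
Proof.
move=> [MT M_ge0] dM x.
have uM : M \in unitmx by rewrite unitmxE unitfE.
set Mi := invmx M; set s := (mxnorm1 Mi + 1)^-1; set y := x *m Mi.
have MiT : Mi^T = Mi by rewrite /Mi trmx_inv MT.
have K0 := mxnorm1_ge0 Mi.
have s0 : 0 < s by rewrite invr_gt0; lra.
have sK : s * mxnorm1 Mi = 1 - s.
  by rewrite /s; field; rewrite gt_eqF // ltr_wpDl.
have b1 : bilin M x ((- s) *: y) = - s * enorm x ^+ 2.
  rewrite /bilin linearZ /= -scalemxAr mxE enorm_sqr /y trmx_mul MiT.
  by rewrite mulmxA -(mulmxA x) mulmxV // mulmx1.
have b2 : bilin M ((- s) *: y) x = - s * enorm x ^+ 2.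
  by rewrite bilinZl /bilin /y -(mulmxA x) mulVmx // mulmx1 enorm_sqr.
have q1 : quad M ((- s) *: y) = s ^+ 2 * quad Mi x.
  by rewrite quadZ sqrrN /quad /y trmx_mul MiT -!mulmxA mulKmx.
have := M_ge0 (x + (- s) *: y); rewrite quadD b1 b2 q1.
have := normr_quad_le Mi x; rewrite ler_norml => /andP[_ qMi].
have x2 : 0 <= enorm x ^+ 2 by rewrite sqr_ge0.
have : s ^+ 2 * quad Mi x <= s * (s * mxnorm1 Mi) * enorm x ^+ 2.
  rewrite (_ : _ * _ * _ = s ^+ 2 * (mxnorm1 Mi * enorm x ^+ 2)); last by ring.
  by rewrite ler_wpM2l ?sqr_ge0.
rewrite sK; nra.
Qed.

End quadratic_forms.

Section measurability.
Variables (R : realType) (d : nat).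

Lemma continuous_measurable_Rd (f : 'rV[R]_d -> R) :
  continuous f -> measurable_fun [set: Rd R d] f.
Proof.
move=> cf; apply: (measurability _ (RGenOpens.measurableE R)).
move=> _ [_ [a [b ->]] <-]; apply: sub_sigma_algebra; rewrite setTI.
by move/continuousP : cf; apply; exact: interval_open.
Qed.

Lemma measurable_inner (z : 'rV[R]_d) :
  measurable_fun [set: Rd R d] (fun y => inner z y).
Proof.
rewrite (_ : (fun y => _) = (fun y : Rd R d => \sum_(i < d) z 0 i * y 0 i)).
  apply: measurable_sum => i; apply: measurable_funM; first exact: measurable_cst.
  by apply: continuous_measurable_Rd; exact: coord_continuous.
by apply/funext => y; rewrite innerE.
Qed.

Lemma measurable_enorm_sqr :
  measurable_fun [set: Rd R d] (fun y => enorm y ^+ 2).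
Proof.
rewrite (_ : (fun y => _) = (fun y : Rd R d => \sum_(i < d) y 0 i * y 0 i)).
  apply: measurable_sum => i.
  by apply: measurable_funM; apply: continuous_measurable_Rd; exact: coord_continuous.
by apply/funext => y; rewrite enorm_sqr innerE.
Qed.

Lemma measurable_one_sub_cos_inner (z : 'rV[R]_d) :
  measurable_fun [set: Rd R d] (fun y => 1 - cos (inner z y)).
Proof.
apply: measurable_funB; first exact: measurable_cst.
apply: measurableT_comp (measurable_inner z).
by apply: continuous_measurable_fun; exact: continuous_cos.
Qed.

Lemma measurable_min1_enorm_sqr :
  measurable_fun [set: Rd R d] (fun y => Num.min 1 (enorm y ^+ 2)).
Proof.
by apply: measurable_minr; [exact: measurable_cst | exact: measurable_enorm_sqr].
Qed.

End measurability.

Section levy_exponent.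
Variables (R : realType) (d : nat) (N : {measure set Rd R d -> \bar R}).
Implicit Types (y z v : 'rV[R]_d) (A : 'M[R]_d).

Definition cos_integral z :=
  (\int[N]_(y in [set: Rd R d]) (1 - cos (inner z y))%:E)%E.

Definition min_moment :=
  (\int[N]_(y in [set: Rd R d]) (Num.min 1 (enorm y ^+ 2))%:E)%E.

Definition sqr_moment := (\int[N]_(y in [set: Rd R d]) (enorm y ^+ 2)%:E)%E.

Lemma min_moment_ge0 : (0 <= min_moment)%E.
Proof. by apply: integral_ge0 => y _; rewrite lee_fin le_min ler01 sqr_ge0. Qed.

Lemma sqr_moment_ge0 : (0 <= sqr_moment)%E.
Proof. by apply: integral_ge0 => y _; rewrite lee_fin sqr_ge0. Qed.

Lemma one_sub_cos_inner_le_min z y :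
  1 - cos (inner z y) <= (2 + d%:R ^+ 2 * enorm z ^+ 2) * Num.min 1 (enorm y ^+ 2).
Proof.
have := one_sub_cos_le_sqr (inner z y); have := sqr_inner_le z y.
have := cos_geN1 (inner z y); have := sqr_ge0 (inner z y).
have := sqr_ge0 (enorm y).
have : 0 <= d%:R ^+ 2 * enorm z ^+ 2 by rewrite mulr_ge0 ?sqr_ge0.
case: (leP 1 (enorm y ^+ 2)) => y1; nra.
Qed.

Lemma one_sub_cos_inner_le_sqr z y :
  1 - cos (inner z y) <= d%:R ^+ 2 * enorm z ^+ 2 / 2 * enorm y ^+ 2.
Proof.
have := one_sub_cos_le_sqr (inner z y); have := sqr_inner_le z y.
by rewrite mulrAC; lra.
Qed.

Lemma one_sub_cos_inner_scale_le v y (t : R) : 1 <= t ->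
  (1 - cos (t * inner v y)) / t ^+ 2 <=
  (2 + d%:R ^+ 2 * enorm v ^+ 2) * Num.min 1 (enorm y ^+ 2).
Proof.
move=> t1; have t2 : 1 <= t ^+ 2 by rewrite expr_ge1 // (le_trans ler01).
rewrite ler_pdivrMr ?(lt_le_trans ltr01) // -innerZl.
apply: le_trans (one_sub_cos_inner_le_min _ _) _.
rewrite enormZ exprMn ger0_norm ?(le_trans ler01) // [X in _ <= X]mulrAC.
apply: ler_wpM2r; first by rewrite le_min ler01 sqr_ge0.
have : 0 <= d%:R ^+ 2 * enorm v ^+ 2 by rewrite mulr_ge0 ?sqr_ge0.
nra.
Qed.

Lemma integrable_min1_enorm_sqr : levy_measure N ->
  N.-integrable setT (fun y => (Num.min 1 (enorm y ^+ 2))%:E).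
Proof.
case=> _ min_fin; apply/integrableP; split.
  by apply/measurable_EFinP; exact: measurable_min1_enorm_sqr.
rewrite (eq_integral (fun y : Rd R d => (Num.min 1 (enorm y ^+ 2))%:E)) // => y _.
by rewrite gee0_abs // lee_fin le_min ler01 sqr_ge0.
Qed.

Lemma cos_integral_ge0 z : (0 <= cos_integral z)%E.
Proof. by apply: integral_ge0 => y _; rewrite lee_fin subr_ge0 cos_le1. Qed.

Lemma fine_cos_integral_le z (h : Rd R d -> R) (c : R) :
  0 <= c -> measurable_fun setT h -> (forall y, 0 <= h y) ->
  (forall y, 1 - cos (inner z y) <= c * h y) ->
  (\int[N]_(y in [set: Rd R d]) (h y)%:E < +oo)%E ->
  cos_integral z \is a fin_num /\
  fine (cos_integral z) <= c * fine (\int[N]_(y in [set: Rd R d]) (h y)%:E).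
Proof.
move=> c0 mh h0 hb hoo.
have h_fin : (\int[N]_(y in [set: Rd R d]) (h y)%:E)%E \is a fin_num.
  by rewrite ge0_fin_numE ?integral_ge0 // => y _; rewrite lee_fin.
have le_ch : (cos_integral z <= (c * fine (\int[N]_(y in setT) (h y)%:E))%:E)%E.
  rewrite EFinM fineK // -ge0_integralZl_EFin //; first last.
  - exact/measurable_EFinP.
  - by move=> y _; rewrite lee_fin.
  apply: ge0_le_integral => //.
  - by apply/measurable_EFinP; exact: measurable_one_sub_cos_inner.
  - by apply/measurable_EFinP; apply: measurable_funM; first exact: measurable_cst.
  - by move=> y _; rewrite lee_fin hb.
have F_fin : cos_integral z \is a fin_num.
  by rewrite ge0_fin_numE ?cos_integral_ge0 // (le_lt_trans le_ch) ?ltry.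
by split => //; rewrite -lee_fin fineK.
Qed.

Lemma cos_integral_le_min_moment z : levy_measure N ->
  cos_integral z \is a fin_num /\
  fine (cos_integral z) <= (2 + d%:R ^+ 2 * enorm z ^+ 2) * fine min_moment.
Proof.
case=> _ min_fin; apply: fine_cos_integral_le (one_sub_cos_inner_le_min z) _ => //.
- by rewrite addr_ge0 // mulr_ge0 ?sqr_ge0.
- exact: measurable_min1_enorm_sqr.
- by move=> y; rewrite le_min ler01 sqr_ge0.
Qed.

Lemma cos_integral_fin z : levy_measure N -> cos_integral z \is a fin_num.
Proof. by move=> /(cos_integral_le_min_moment z)[]. Qed.

Lemma RePsi_ge_quad A z : quad A z / 2 <= RePsi A N z.
Proof. by rewrite /RePsi lerDl fine_ge0 ?cos_integral_ge0. Qed.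

Lemma RePsi_le_min_moment A z : levy_measure N ->
  RePsi A N z <= quad A z / 2 + (2 + d%:R ^+ 2 * enorm z ^+ 2) * fine min_moment.
Proof. by move=> /(cos_integral_le_min_moment z)[_]; rewrite /RePsi lerD2l. Qed.

Lemma RePsi_le_sqr_moment A z : (sqr_moment < +oo)%E ->
  RePsi A N z <= quad A z / 2 + d%:R ^+ 2 * enorm z ^+ 2 / 2 * fine sqr_moment.
Proof.
move=> sqr_fin; rewrite /RePsi lerD2l.
have [] // := fine_cos_integral_le _ _ _ (one_sub_cos_inner_le_sqr z).
- by rewrite mulr_ge0 ?invr_ge0 // mulr_ge0 ?sqr_ge0.
- exact: measurable_enorm_sqr.
- by move=> y; rewrite sqr_ge0.
Qed.

Lemma RePsi_le_Psistar A z r : levy_measure N -> enorm z <= r ->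
  RePsi A N z <= Psistar A N r.
Proof.
move=> levyN zr; apply: ub_le_sup; last by exists z.
exists (mxnorm1 A * r ^+ 2 / 2 + (2 + d%:R ^+ 2 * r ^+ 2) * fine min_moment).
move=> _ [x xr <-]; apply: le_trans (RePsi_le_min_moment A x levyN) _.
have m0 := fine_ge0 min_moment_ge0.
rewrite lerD ?ler_wpM2r ?quad_le_sqr ?lerD2l ?ler_wpM2l ?sqr_ge0 ?enorm_le_sqr //.
Qed.

Lemma Psistar_le A r B : 0 <= r ->
  (forall z, enorm z <= r -> RePsi A N z <= B) -> Psistar A N r <= B.
Proof.
move=> r0 RePsi_le; apply: ge_sup; last by move=> _ [z zr <-]; exact: RePsi_le.
by exists (RePsi A N 0), 0 => //=; rewrite enorm0.
Qed.

End levy_exponent.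

Lemma gt_inv_gt0 (R : realType) (T : \bar R) (r : R) :
  (0 < T)%E -> gt_inv T r -> 0 < r.
Proof.
by case: T => [t||] //=; rewrite lte_fin => t0; apply: lt_trans; rewrite invr_gt0.
Qed.

Lemma gt_inv_nat_near (R : realType) (T : \bar R) :
  (0 < T)%E -> \forall n \near \oo, gt_inv T (n.+1%:R : R).
Proof.
case: T => [t||] //= t0; last exact: nearW.
by apply: filterS (nbhs_infty_gtr t^-1) => n /lt_le_trans; apply; rewrite ler_nat.
Qed.

(* For [d = 0] the function [h] vanishes identically; excluding this case is
   the only use of the standing assumption. *)
Lemma standing_dim_gt0 (R : realType) (d : nat) (A : 'M[R]_d)
    (N : {measure set Rd R d -> \bar R}) :
  standing A N -> (0 < d)%N.
Proof.
rewrite lt0n; apply: contraPT => /negPn /eqP d0; subst d.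
have e0 (y : 'rV[R]_0) : enorm y = 0.
  by apply/eqP; rewrite enorm_eq0; apply/eqP; exact: thinmx0.
have h0 r : hfun A N r = 0%E.
  rewrite /hfun; have -> : opnorm A = 0.
    rewrite /opnorm (_ : [set _ | _ in _] = [set 0]) ?sup1 //.
    apply/seteqP; split => [_ [z _ <-] | _ ->] /=; first by rewrite e0.
    by exists 0; rewrite /= ?e0.
  rewrite mul0r add0e; apply: integral0_eq => y _.
  by rewrite e0 expr0n /= mul0r; congr (_%:E); rewrite minEle ler10.
move=> /cvgeyPger /(_ 1 (num_real _)) h1.
have [|r] := filter_ex h1; first exact: at_right_proper_filter.
by rewrite h0 lee_fin ler10.
Qed.

Section quadratic_bounds.
Variables (R : realType) (d : nat) (A : 'M[R]_d) (N : {measure set Rd R d -> \bar R}).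
Hypotheses (A_nnd : symmetric_nnd A) (levyN : levy_measure N).

Lemma RePsi_ge0 z : 0 <= RePsi A N z.
Proof. by apply: le_trans (RePsi_ge_quad N A z); rewrite divr_ge0 //; case: A_nnd. Qed.

Lemma Psistar_ge0 r : 0 <= r -> 0 <= Psistar A N r.
Proof.
by move=> r0; apply: le_trans (RePsi_ge0 0) (RePsi_le_Psistar A levyN _); rewrite enorm0.
Qed.

Lemma Psistar_ge_sqr u r : enorm u = 1 -> 0 <= r ->
  r ^+ 2 * quad A u / 2 <= Psistar A N r.
Proof.
move=> u1 r0; rewrite -quadZ.
apply: le_trans (RePsi_ge_quad N A _) (RePsi_le_Psistar A levyN _).
by rewrite enormZ u1 mulr1 ger0_norm.
Qed.

Lemma RePsi_ge_sqr_unitmx : \det A != 0 ->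
  exists2 lam, 0 < lam & forall x, lam * enorm x ^+ 2 <= RePsi A N x.
Proof.
move=> dA; exists ((mxnorm1 (invmx A) + 1)^-1 / 2).
  by rewrite divr_gt0 // invr_gt0 ltr_wpDl ?mxnorm1_ge0.
move=> x; apply: le_trans (RePsi_ge_quad N A x).
rewrite mulrAC [_^-1 * _]mulrC; apply: ler_wpM2r; first by rewrite invr_ge0.
exact: quad_ge_unitmx.
Qed.

Lemma Psistar_le_sqr_ge1 :
  exists2 C, 0 <= C & forall r, 1 <= r -> Psistar A N r <= C * r ^+ 2.
Proof.
have m0 := fine_ge0 (min_moment_ge0 N).
exists (mxnorm1 A / 2 + (2 + d%:R ^+ 2) * fine (min_moment N)) => [|r r1].
  by rewrite addr_ge0 ?mulr_ge0 ?divr_ge0 ?addr_ge0 ?sqr_ge0 ?mxnorm1_ge0.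
have r0 : 0 <= r by apply: le_trans r1.
apply: Psistar_le => // z zr; apply: le_trans (RePsi_le_min_moment A z levyN) _.
have dzm : d%:R ^+ 2 * enorm z ^+ 2 * fine (min_moment N) <=
    d%:R ^+ 2 * r ^+ 2 * fine (min_moment N).
  by rewrite ler_wpM2r // ler_wpM2l ?sqr_ge0 ?enorm_le_sqr.
have mr : fine (min_moment N) <= r ^+ 2 * fine (min_moment N).
  by rewrite ler_peMl // expr_ge1.
have := quad_le_sqr A zr; lra.
Qed.

Lemma Psistar_le_sqr_moment : (sqr_moment N < +oo)%E ->
  exists2 C, 0 <= C & forall r, 0 <= r -> Psistar A N r <= C * r ^+ 2.
Proof.
move=> sqr_fin; have m0 := fine_ge0 (sqr_moment_ge0 N).
exists (mxnorm1 A / 2 + d%:R ^+ 2 * fine (sqr_moment N) / 2) => [|r r0].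
  by rewrite addr_ge0 ?mulr_ge0 ?divr_ge0 ?sqr_ge0 ?mxnorm1_ge0.
apply: Psistar_le => // z zr.
apply: le_trans (RePsi_le_sqr_moment A z sqr_fin) _.
have dzm : d%:R ^+ 2 * enorm z ^+ 2 / 2 * fine (sqr_moment N) <=
    d%:R ^+ 2 * r ^+ 2 / 2 * fine (sqr_moment N).
  by rewrite ler_wpM2r // ler_wpM2r // ler_wpM2l ?sqr_ge0 ?enorm_le_sqr.
have := quad_le_sqr A zr; lra.
Qed.

Lemma C3_with_sqr_bounds (T : \bar R) (lam C : R) :
  (0 < d)%N -> (0 < T)%E -> 0 < lam -> 0 <= C ->
  (forall x, lam * enorm x ^+ 2 <= RePsi A N x) ->
  (forall r, gt_inv T r -> Psistar A N r <= C * r ^+ 2) -> C3_with A N T.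
Proof.
move=> d0 T0 lam0 C0 RePsi_ge Psistar_le_sqr; split => //.
have [u u1] := enorm_unit_exists R d0.
have C1 : 0 < C + 1 by lra.
have k0 : 0 < lam / (C + 1) by rewrite divr_gt0.
set c3 := Num.min 1 (lam / (C + 1)).
have c3P (P s : R) : 0 <= P -> 0 <= s -> P <= C * s -> c3 * P <= lam * s.
  move=> P0 s0 Ps; have c3k : c3 <= lam / (C + 1) by rewrite ge_min lexx orbT.
  have -> : lam * s = lam / (C + 1) * ((C + 1) * s) by field; rewrite gt_eqF.
  apply: le_trans (ler_wpM2r P0 c3k) _; apply: ler_wpM2l; first exact: ltW.
  by rewrite mulrDl mul1r (le_trans Ps) // lerDl.
exists c3, 2; split.
- by rewrite lt_min ltr01 k0 ge_min lexx.
- by rewrite ltr0n lexx.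
- move=> x Tx; apply: le_trans (RePsi_ge x).
  by apply: c3P; rewrite ?Psistar_ge0 ?enorm_ge0 ?sqr_ge0 ?Psistar_le_sqr.
- move=> l r l1 Tr; have r0 := ltW (gt_inv_gt0 T0 Tr).
  have l0 : 0 <= l by apply: le_trans l1.
  have lru : enorm ((l * r) *: u) = l * r by rewrite enormZ u1 mulr1 ger0_norm ?mulr_ge0.
  have lru_le : enorm ((l * r) *: u) <= l * r by rewrite lru.
  apply: le_trans (RePsi_le_Psistar A levyN lru_le).
  apply: le_trans (RePsi_ge _); rewrite lru powR_mulrn // -mulrA.
  apply: c3P; rewrite ?mulr_ge0 ?sqr_ge0 ?Psistar_ge0 //.
  by rewrite exprMn mulrCA ler_wpM2l ?sqr_ge0 ?Psistar_le_sqr.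
Qed.

Lemma C3_with_unitmx (T : \bar R) (C : R) :
  (0 < d)%N -> (0 < T)%E -> 0 <= C -> \det A != 0 ->
  (forall r, gt_inv T r -> Psistar A N r <= C * r ^+ 2) -> C3_with A N T.
Proof.
move=> d0 T0 C0 /RePsi_ge_sqr_unitmx[lam lam0 RePsi_ge].
exact: C3_with_sqr_bounds d0 T0 lam0 C0 RePsi_ge.
Qed.

End quadratic_bounds.

Section singular_case.
Variables (R : realType) (d : nat) (N : {measure set Rd R d -> \bar R}).
Hypothesis levyN : levy_measure N.

Lemma cos_integral_div_sqr_cvg0 (v : 'rV[R]_d) :
  (fun n => fine (cos_integral N (n.+1%:R *: v)) / n.+1%:R ^+ 2) @ \oo --> 0.
Proof.
pose g n (y : Rd R d) := ((1 - cos (n.+1%:R * inner v y)) / n.+1%:R ^+ 2)%:E.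
set c := 2 + d%:R ^+ 2 * enorm v ^+ 2.
have mg n : measurable_fun setT (g n).
  apply/measurable_EFinP; apply: measurable_funM; last exact: measurable_cst.
  have := measurable_one_sub_cos_inner (n.+1%:R *: v).
  by under eq_fun do rewrite innerZl.
have gG n y : (`|g n y| <= c%:E * (Num.min 1 (enorm y ^+ 2))%:E)%E.
  rewrite /g gee0_abs ?lee_fin ?divr_ge0 ?sqr_ge0 ?subr_ge0 ?cos_le1 //.
  by apply: one_sub_cos_inner_scale_le; rewrite ler1n.
have g_cvg y : g ^~ y @ \oo --> 0%E.
  by apply: cvg_EFin; [exact: nearW | exact: one_sub_cos_mul_div_sqr_cvg0].
have [_ _] := dominated_convergence measurableT mg (measurable_cst (0%E : \bar R))
  (aeW _ (fun y _ => g_cvg y))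
  (integrableZl measurableT c (integrable_min1_enorm_sqr levyN))
  (aeW _ (fun y n _ => gG n y)).
rewrite integral0 (_ : [sequence _]_n =
    fun n => (fine (cos_integral N (n.+1%:R *: v)) / n.+1%:R ^+ 2)%:E).
  by move/fine_cvgP => [].
apply/funext => n /=; rewrite /g; under eq_integral do rewrite EFinM -innerZl.
rewrite ge0_integralZr //.
- by rewrite EFinM fineK // cos_integral_fin.
- by apply/measurable_EFinP; exact: measurable_one_sub_cos_inner.
Qed.

Variable A : 'M[R]_d.
Hypothesis A_nnd : symmetric_nnd A.

Lemma C3_singular_eq0 : C3 A N -> \det A = 0 -> A = 0.
Proof.
move=> [T [T0 [c3 [a3 [/andP[c3_gt0 _] _ C3_RePsi _]]]]] dA.
apply/eqP; apply: contraT => A0.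
have [v [v1 vA]] := det0_unit_kernel dA.
have [u [u1 qu]] := nnd_quad_gt0 A_nnd A0.
pose t n : R := n.+1%:R.
have t_gt0 n : 0 < t n by rewrite ltr0Sn.
have tv n : enorm (t n *: v) = t n by rewrite enormZ v1 mulr1 gtr0_norm.
have RePsi_tv n : RePsi A N (t n *: v) = fine (cos_integral N (t n *: v)).
  by rewrite /RePsi quadZ /quad vA mul0mx mxE mulr0 mul0r add0r.
have lower n : gt_inv T (t n) ->
    c3 * quad A u / 2 <= fine (cos_integral N (t n *: v)) / t n ^+ 2.
  move=> Ttn; rewrite ler_pdivlMr ?exprn_gt0 ?t_gt0 // -RePsi_tv.
  have := C3_RePsi (t n *: v); rewrite tv => /(_ Ttn); apply: le_trans.
  rewrite (_ : _ * t n ^+ 2 = c3 * (t n ^+ 2 * quad A u / 2)); last by ring.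
  by apply: ler_wpM2l; [exact: ltW | exact: Psistar_ge_sqr (ltW (t_gt0 n))].
have : c3 * quad A u / 2 <= 0.
  apply: cvgr_to_ge (cos_integral_div_sqr_cvg0 v) _.
  by apply: filterS (gt_inv_nat_near T0) => n; exact: lower.
by rewrite leNgt !mulr_gt0.
Qed.

End singular_case.

Theorem lemma4p1 (R : realType) (d : nat) (A : 'M[R]_d)
    (N : {measure set Rd R d -> \bar R}) (b : 'rV[R]_d) :
  symmetric_nnd A -> levy_measure N -> standing A N ->
  ((\det A != 0) <-> (C3 A N /\ A != 0)) /\
  (\det A != 0 ->
   (\int[N]_(y in [set: Rd R d]) ((enorm y) ^+ 2)%:E < +oo)%E ->
   C3_with A N +oo%E).
Proof.
move=> A_nnd levyN /standing_dim_gt0 d0; split; first split.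
- move=> dA; split; last first.
    by apply: contra_neq dA => ->; rewrite -(scale0r 1%:M) detZ expr0n gtn_eqF // mul0r.
  have [C C0 Psistar_le_sqr] := Psistar_le_sqr_ge1 A levyN.
  exists 1%:E; apply: (C3_with_unitmx A_nnd levyN d0 _ C0 dA) => // r.
  by rewrite /= invr1 => /ltW; exact: Psistar_le_sqr.
- by case=> /(C3_singular_eq0 levyN A_nnd); exact: contra_neq.
- move=> dA /(Psistar_le_sqr_moment A)[C C0 Psistar_le_sqr].
  apply: (C3_with_unitmx A_nnd levyN d0 _ C0 dA) => // r /ltW; exact: Psistar_le_sqr.
Qed.
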